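(* Assume (A1)–(A3), (B') and (C). (i) For every $n\ge3$, all $u_i,v_i\in\mathbf h$ and $\epsilon_i\in\mathbb Z_2$, $\lim_{t\to0}\frac1t\langle\Omega,(U^{(\epsilon_1)}_t-1)(u_1,v_1)\cdots(U^{(\epsilon_n)}_t-1)(u_n,v_n)\Omega\rangle=0$. (ii) For $u\in\mathbf h$, $v\in\mathcal D(G)$, product vectors $\underline p,\underline w\in\mathbf h^{\otimes n}$, $\epsilon\in\mathbb Z_2$, $\underline\epsilon'\in\mathbb Z_2^n$: $\lim_{t\to0}\frac1t\langle(U^{(\epsilon)}_t-1)(u,v)\Omega,(U^{(\underline\epsilon')}_t-1)(\underline p,\underline w)\Omega\rangle=(-1)^\epsilon\lim_{t\to0}\frac1t\langle(U_t-1)(u,v)\Omega,(U^{(\underline\epsilon')}_t-1)(\underline p,\underline w)\Omega\rangle$ (meaning: one side exists iff the other does, and they are then equal).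
   Context: All Hilbert spaces are complex and separable, with inner products antilinear in the first variable. Let $\mathbf h,\mathcal H$ be Hilbert spaces and $\Omega\in\mathcal H$ a fixed unit vector. For $A\in\mathcal B(\mathbf h\otimes\mathcal H)$ and $u,v\in\mathbf h$, the operator $A(u,v)\in\mathcal B(\mathcal H)$ is defined by $\langle\xi_1,A(u,v)\xi_2\rangle=\langle u\otimes\xi_1,A\,(v\otimes\xi_2)\rangle$ for all $\xi_1,\xi_2\in\mathcal H$; the same definition is used with $\mathbf h$ replaced by $\mathbf h^{\otimes n}$. Let $\{U_{s,t}:0\le s\le t<\infty\}$ be unitary operators on $\mathbf h\otimes\mathcal H$, $U_t:=U_{0,t}$, $U^{(0)}_{s,t}:=U_{s,t}$, $U^{(1)}_{s,t}:=U_{s,t}^*$. For $n\ge1$, $1\le k\le n$, $\epsilon\in\mathbb Z_2=\{0,1\}$, let $U^{(n,\epsilon)}_{s,t;k}$ be the operator on $\mathbf h^{\otimes n}\otimes\mathcal H$ acting as $U^{(\epsilon)}_{s,t}$ on (the $k$-th copy of $\mathbf h$)$\otimes\mathcal H$ and as the identity on the other copies of $\mathbf h$. For $\underline\epsilon\in\mathbb Z_2^n$ and $0\le s_1\le t_1\le s_2\le\dots\le s_n\le t_n$ put $U^{(\underline\epsilon)}_{\underline s,\underline t}:=U^{(n,\epsilon_1)}_{s_1,t_1;1}\cdots U^{(n,\epsilon_n)}_{s_n,t_n;n}$, so that for product vectors $\underline u=\otimes_iu_i$, $\underline v=\otimes_iv_i$ one has $U^{(\underline\epsilon)}_{\underline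 s,\underline t}(\underline u,\underline v)=\prod_{k=1}^nU^{(\epsilon_k)}_{s_k,t_k}(u_k,v_k)$ (ordered product). Write $U^{(\underline\epsilon)}_{s,t}$ when all $s_k=s$, $t_k=t$, and $U^{(n)}_t$ when moreover $s=0$, $\underline\epsilon=\underline0$. Assumptions: (A1) $U_{r,s}U_{s,t}=U_{r,t}$ for $r\le s\le t$. (A2) If $[s_1,t_1)\cap[s_2,t_2)=\emptyset$ then (i) $U_{s_1,t_1}(u_1,v_1)$ commutes with $U_{s_2,t_2}(u_2,v_2)$ and $U_{s_2,t_2}(u_2,v_2)^*$ for all $u_i,v_i\in\mathbf h$; (ii) for time tuples $\underline a,\underline b$ with $s_1\le a_1\le b_1\le\dots\le a_n\le b_n\le t_1$ and $\underline q,\underline r$ with $s_2\le q_1\le r_1\le\dots\le q_m\le r_m\le t_2$, product vectors $\underline u,\underline v\in\mathbf h^{\otimes n}$, $\underline p,\underline w\in\mathbf h^{\otimes m}$, and $\underline\epsilon\in\mathbb Z_2^n,\underline\epsilon'\in\mathbb Z_2^m$: $\langle\Omega,U^{(\underline\epsilon)}_{\underline a,\underline b}(\underline u,\underline v)U^{(\underline\epsilon')}_{\underline q,\underline r}(\underline p,\underline w)\Omega\rangle=\langle\Omega,U^{(\underline\epsilon)}_{\underline a,\underline b}(\underline u,\underline v)\Omega\rangle\langle\Omega,U^{(\underline\epsilon')}_{\underline q,\underline r}(\underline p,\underline w)\Omega\rangle$. (A3) $\langle\Omega,U^{(\underline\epsilon)}_{s,t}(\underline u,\underline v)\Omega\rangle=\langle\Omega,U^{(\underline\epsilon)}_{0,t-s}(\underline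 u,\underline v)\Omega\rangle$. (B') $\lim_{t\to0}\langle\Omega,(U_t-1)(u,v)\Omega\rangle=0$ for all $u,v\in\mathbf h$. (C) For all $u_i,v_i\in\mathbf h$, $\epsilon_i\in\mathbb Z_2$ ($i=1,2,3$): $\lim_{t\to0}\frac1t\langle\Omega,(U^{(\epsilon_1)}_t-1)(u_1,v_1)(U^{(\epsilon_2)}_t-1)(u_2,v_2)(U^{(\epsilon_3)}_t-1)(u_3,v_3)\Omega\rangle=0$. $T_t$ is the operator on $\mathbf h$ with $\langle u,T_tv\rangle=\langle\Omega,U_t(u,v)\Omega\rangle$; it is a strongly continuous contraction semigroup and $G$ denotes its generator, with domain $\mathcal D(G)$. *)

From mathcomp Require Import all_boot all_order all_algebra.
From mathcomp Require Import all_classical all_reals all_analysis.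
From mathcomp Require Import complex.
Import Order.TTheory GRing.Theory Num.Theory.
Import numFieldNormedType.Exports numFieldTopology.Exports.

Set Implicit Arguments.
Unset Strict Implicit.
Unset Printing Implicit Defensive.

Local Open Scope ring_scope.
Local Open Scope classical_set_scope.

Definition Cx (R : realType) := (R[i])^o.

Section Hilbert.
Variable R : realType.

Record is_hilbert (V : completeNormedModType (Cx R)) (ip : V -> V -> Cx R)
  : Prop := {
  ip_linr : forall (a : Cx R) x y z, ip x (a *: y + z) = a * ip x y + ip x z;
  ip_conj : forall x y, ip y x = (ip x y)^*;
  ip_norm : forall x, ip x x = `|x| ^+ 2;
  hilbert_separable : exists D : set V, countable D /\ closure D = setT }.

(* [tens] realizes K as the Hilbert tensor product h (x) H:
   bilinear, <u(x)x, v(x)y> = <u,v><x,y>, and elementary tensors span a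
   dense subspace (this characterizes h (x) H up to unitary equivalence). *)
Record is_tensor (h H K : completeNormedModType (Cx R))
    (iph : h -> h -> Cx R) (ipH : H -> H -> Cx R) (ipK : K -> K -> Cx R)
    (tens : h -> H -> K) : Prop := {
  tens_linl : forall (a : Cx R) u u' x,
      tens (a *: u + u') x = a *: tens u x + tens u' x;
  tens_linr : forall (a : Cx R) u x x',
      tens u (a *: x + x') = a *: tens u x + tens u x';
  tens_ip : forall u v x y, ipK (tens u x) (tens v y) = iph u v * ipH x y;
  tens_dense : closure [set z | exists n (us : 'I_n -> h) (xs : 'I_n -> H),
                          z = \sum_(k < n) tens (us k) (xs k)] = setT }.

Definition is_linop (V : completeNormedModType (Cx R)) (A : V -> V) :=
  forall (a : Cx R) x y, A (a *: x + y) = a *: A x + A y.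

Definition unitary (V : completeNormedModType (Cx R)) (ip : V -> V -> Cx R)
    (A : V -> V) :=
  [/\ is_linop A, (forall x y, ip (A x) (A y) = ip x y) &
      (forall y, exists x, A x = y)].

Definition adjoint (V : completeNormedModType (Cx R)) (ip : V -> V -> Cx R)
    (A : V -> V) : V -> V :=
  fun y => xget 0 [set z | forall x, ip z x = ip y (A x)].

Section Setting.
Variables (h H K : completeNormedModType (Cx R)).
Variables (iph : h -> h -> Cx R) (ipH : H -> H -> Cx R) (ipK : K -> K -> Cx R).
Variable tens : h -> H -> K.
Variable Omega : H.
Variable U : R -> R -> K -> K.

(* A(u,v) in B(H): <x1, A(u,v) x2> = <u (x) x1, A (v (x) x2)> *)
Definition pmat (A : K -> K) (u v : h) : H -> H :=
  fun x2 => xget 0 [set y | forall x1, ipH x1 y = ipK (tens u x1) (A (tens v x2))].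

Definition Ueps (e : bool) (s t : R) : K -> K :=
  if e then adjoint ipK (U s t) else U s t.

(* one factor U^{(eps)}_{s,t}(u,v) of an ordered product *)
Record fct := Fct { fe : bool; fs : R; ft : R; fu : h; fv : h }.

(* U^{(eps)}_{s,t}(u,v) for product vectors u = (x)_k u_k, v = (x)_k v_k :
   the ordered product of the U^{(eps_k)}_{s_k,t_k}(u_k,v_k) *)
Definition prodop (l : seq fct) : H -> H :=
  foldr (fun f acc => pmat (Ueps (fe f) (fs f) (ft f)) (fu f) (fv f) \o acc) id l.

Definition expect (l : seq fct) : Cx R := ipH Omega (prodop l Omega).

Definition times_in (s t : R) (l : seq fct) :=
  sorted <=%R (s :: rcons (flatten [seq [:: fs f; ft f] | f <- l]) t).

Definition unif (s t : R) (l : seq (bool * h * h)) : seq fct :=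
  [seq Fct f.1.1 s t f.1.2 f.2 | f <- l].

Definition disjoint_int (s1 t1 s2 t2 : R) :=
  forall r, ~ ((s1 <= r < t1) /\ (s2 <= r < t2)).

Definition A1 := forall r s t, 0 <= r -> r <= s -> s <= t ->
  forall x, U r s (U s t x) = U r t x.

Definition A2i := forall s1 t1 s2 t2, 0 <= s1 -> s1 <= t1 -> 0 <= s2 -> s2 <= t2 ->
  disjoint_int s1 t1 s2 t2 -> forall u1 v1 u2 v2 x,
  pmat (U s1 t1) u1 v1 (pmat (U s2 t2) u2 v2 x)
    = pmat (U s2 t2) u2 v2 (pmat (U s1 t1) u1 v1 x) /\
  pmat (U s1 t1) u1 v1 (adjoint ipH (pmat (U s2 t2) u2 v2) x)
    = adjoint ipH (pmat (U s2 t2) u2 v2) (pmat (U s1 t1) u1 v1 x).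

Definition A2ii := forall s1 t1 s2 t2, 0 <= s1 -> s1 <= t1 -> 0 <= s2 -> s2 <= t2 ->
  disjoint_int s1 t1 s2 t2 -> forall l1 l2 : seq fct,
  (0 < size l1)%N -> (0 < size l2)%N -> times_in s1 t1 l1 -> times_in s2 t2 l2 ->
  expect (l1 ++ l2) = expect l1 * expect l2.

Definition A3 := forall (l : seq (bool * h * h)) s t, (0 < size l)%N ->
  0 <= s -> s <= t -> expect (unif s t l) = expect (unif 0 (t - s) l).

Definition Dop (e : bool) (t : R) (u v : h) : H -> H :=
  pmat (fun x => Ueps e 0 t x - x) u v.

Definition Bp := forall u v,
  (fun t => ipH Omega (pmat (fun x => U 0 t x - x) u v Omega)) @ 0^'+ --> (0 : Cx R).

Definition dquot (l : seq (bool * h * h)) (t : R) : Cx R :=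
  ((t%:C)%C : Cx R)^-1 * ipH Omega (foldr (fun f acc => Dop f.1.1 t f.1.2 f.2 \o acc) id l Omega).

Definition Cond := forall l : seq (bool * h * h), size l = 3 ->
  dquot l @ 0^'+ --> (0 : Cx R).

Definition Tsg (t : R) (v : h) : h :=
  xget 0 [set y | forall u, iph u y = ipH Omega (pmat (U 0 t) u v Omega)].

Definition domG (v : h) : Prop :=
  cvg ((fun t => ((t%:C)%C : Cx R)^-1 *: (Tsg t v - v)) @ 0^'+).

(* t |-> (1/t) < (U^{(e)}_t-1)(u,v) Omega, (U^{(e')}_t-1)(p,w) Omega > with
   (U^{(e')}_t - 1)(p,w) = U^{(e')}_t(p,w) - <p,w> 1 for product vectors *)
Definition mixq (e : bool) (u v : h) (l : seq (bool * h * h)) (t : R) : Cx R :=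
  ((t%:C)%C : Cx R)^-1 * ipH (Dop e t u v Omega)
    (prodop (unif 0 t l) Omega - (\prod_(f <- l) iph f.1.2 f.2) *: Omega).

End Setting.
End Hilbert.

From mathcomp Require Import all_boot all_order all_algebra.
From mathcomp Require Import all_classical all_reals all_analysis.
From mathcomp Require Import complex.
From mathcomp Require Import ring zify.

(* Write D_e(u,v) for (U^{(e)}_t - 1)(u,v).  Unitarity of U_t gives
   (U^* - 1)(U - 1) = -(U^* - 1) - (U - 1), hence
   <(U_t - 1)(u (x) x), (U_t - 1)(v (x) y)> = - <x, (D_0 + D_1)(u,v) y>,
   a positive form to which Cauchy-Schwarz applies.
   (i) In <Omega, A_1 A_2 W A_3 A_4 Omega>, with single factors A_k, move A_1 A_2
   to the left.  The squared norms of A_2^* A_1^* Omega and A_3 A_4 Omega are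
   bounded by expectations of words of length 3, which are o(t) by (C), while
   W is uniformly bounded.
   (ii) Summed over e, the two quotients give (up to conjugation) t^-1 times the
   positive form at (u (x) xi_t, v (x) Omega), where xi_t = (U_t(p,w) - <p,w>) Omega.
   Its square is at most t^-1 |<Omega, (D_0 + D_1)(v,v) Omega>| = O(|T_t v - v| / t),
   which is O(1) as v is in D(G), times t^-1 |<xi_t, (D_0 + D_1)(u,u) xi_t>|, which
   tends to 0 by (i) because xi_t is a linear combination of words applied to
   Omega.  Only unitarity and (C) are used. *)

Set Implicit Arguments.
Unset Strict Implicit.
Unset Printing Implicit Defensive.

Import Order.TTheory GRing.Theory Num.Theory.
Import numFieldNormedType.Exports numFieldTopology.Exports.

Local Open Scope ring_scope.
Local Open Scope classical_set_scope.

Section InnerProduct.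
Variables (R : realType) (V : completeNormedModType (Cx R)) (ip : V -> V -> Cx R).
Hypothesis Hip : is_hilbert ip.

Lemma iprD x y z : ip x (y + z) = ip x y + ip x z.
Proof. by have := ip_linr Hip 1 x y z; rewrite scale1r mul1r. Qed.

Lemma ipr0 x : ip x 0 = 0.
Proof. by apply: (addIr (ip x 0)); rewrite -iprD !add0r. Qed.

Lemma iprZ x a y : ip x (a *: y) = a * ip x y.
Proof. by have := ip_linr Hip a x y 0; rewrite !addr0 ipr0 addr0. Qed.

Lemma iprN x y : ip x (- y) = - ip x y.
Proof. by rewrite -scaleN1r iprZ mulN1r. Qed.

Lemma iprB x y z : ip x (y - z) = ip x y - ip x z.
Proof. by rewrite iprD iprN. Qed.

Lemma iplD x y z : ip (y + z) x = ip y x + ip z x.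
Proof. by rewrite !(ip_conj Hip x) iprD rmorphD. Qed.

Lemma iplZ x a y : ip (a *: y) x = a^* * ip y x.
Proof. by rewrite !(ip_conj Hip x) iprZ rmorphM. Qed.

Lemma iplB x y z : ip (y - z) x = ip y x - ip z x.
Proof. by rewrite !(ip_conj Hip x) iprB rmorphB. Qed.

Lemma ipr_sum I (r : seq I) (P : pred I) (F : I -> V) x :
  ip x (\sum_(i <- r | P i) F i) = \sum_(i <- r | P i) ip x (F i).
Proof. by elim/big_rec2: _ => [|i y1 y2 _ <-]; rewrite ?ipr0 ?iprD. Qed.

Lemma ip_ge0 x : 0 <= ip x x.
Proof. by rewrite (ip_norm Hip) exprn_ge0. Qed.

Lemma ip_eq0 x : ip x x = 0 -> x = 0.
Proof. by rewrite (ip_norm Hip) => /eqP; rewrite expf_eq0 normr_eq0 => /eqP. Qed.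

Lemma ip_inj x y : (forall z, ip z x = ip z y) -> x = y.
Proof.
by move=> Exy; apply/eqP; rewrite -subr_eq0; apply/eqP/ip_eq0; rewrite iprB Exy subrr.
Qed.

Lemma cauchy_schwarz_sqr x y : `|ip x y| ^+ 2 <= ip x x * ip y y.
Proof.
have [->|y0] := eqVneq y 0; first by rewrite ipr0 normr0 expr0n ipr0 mulr0.
set c := ip y y; set b := ip y x.
have c_gt0 : 0 < c by rewrite lt_def ip_ge0 andbT; apply: contra_neq y0 => /ip_eq0.
have c_real : c^* = c by rewrite -(ip_conj Hip).
(* expand [0 <= <c x - b y, c x - b y>] *)
have := ip_ge0 (c *: x - b *: y).
rewrite !iplB !iprB !iplZ !iprZ (ip_conj Hip y x) c_real -/c -/b.
have -> : c * (c * ip x x) - c * (b * b^*) - (b^* * (c * b) - b^* * (b * c))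
   = c * (c * ip x x - b * b^*) by ring.
rewrite pmulr_rge0 // subr_ge0 -normCK.
by rewrite (ip_conj Hip) -/b norm_conjC mulrC.
Qed.

Lemma cauchy_schwarz x y : `|ip x y| <= `|x| * `|y|.
Proof.
rewrite -(@ler_pXn2r _ 2) ?nnegrE ?mulr_ge0 //.
by rewrite exprMn -!(ip_norm Hip) cauchy_schwarz_sqr.
Qed.

Lemma cvg_ipr {T} {F : set_system T} {FF : Filter F} x (f : T -> V) a :
  f @ F --> a -> (fun t => ip x (f t)) @ F --> ip x a.
Proof.
move=> /cvgrPdistC_lt fa; apply/cvgrPdistC_lt => e e0.
have M0 : 0 < `|x| + 1 by rewrite ltr_wpDl.
apply: filterS (fa _ (divr_gt0 e0 M0)) => t fat /=.
rewrite -iprB (le_lt_trans (cauchy_schwarz _ _)) //.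
rewrite ltr_pdivlMr // in fat; apply: le_lt_trans fat.
by rewrite mulrC ler_wpM2l // lerDl.
Qed.

End InnerProduct.

Section Convergence.
Variable R : realType.

Lemma cvg0D {T} {F : set_system T} {FF : Filter F} (f g : T -> Cx R) :
  f @ F --> 0 -> g @ F --> 0 -> (fun t => f t + g t) @ F --> 0.
Proof. by move=> f0 g0; have := cvgD f0 g0; rewrite addr0; exact. Qed.

Lemma cvg0Ml {T} {F : set_system T} {FF : Filter F} (k : Cx R) (f : T -> Cx R) :
  f @ F --> 0 -> (fun t => k * f t) @ F --> 0.
Proof. by move=> f0; have := cvgMr (a := k) f0; rewrite mulr0; exact. Qed.

Lemma cvg0M {T} {F : set_system T} {FF : Filter F} (f g : T -> Cx R) :
  f @ F --> 0 -> g @ F --> 0 -> (fun t => f t * g t) @ F --> 0.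
Proof. by move=> f0 g0; have := cvgM f0 g0; rewrite mulr0; exact. Qed.

Lemma cvg0_sqr_le {T} {F : set_system T} {FF : Filter F} (f g : T -> Cx R) :
  (\forall t \near F, `|f t| ^+ 2 <= `|g t|) -> g @ F --> 0 -> f @ F --> 0.
Proof.
move=> fg /cvgr0Pnorm_lt g0; apply/cvgr0Pnorm_lt => e e0.
apply: filterS2 fg (g0 _ (exprn_gt0 2 e0)) => t fgt gt.
by rewrite -(@ltr_pXn2r _ 2) ?nnegrE ?(ltW e0) // (le_lt_trans fgt gt).
Qed.

Lemma cvg_at_right_eq (f g : R -> Cx R) (a : R) (l : Cx R) :
  (forall t, a < t -> f t = g t) -> g @ a^'+ --> l -> f @ a^'+ --> l.
Proof.
move=> fg; apply: cvg_trans; apply: near_eq_cvg.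
by near=> t; apply/esym/fg; near: t; exact: nbhs_right_gt.
Unshelve. all: by end_near.
Qed.

Lemma cvg_norm_le_near (V : normedModType (Cx R)) {T} {F : set_system T} {FF : Filter F}
    (f : T -> V) (a : V) :
  f @ F --> a -> \forall t \near F, `|f t| <= `|a| + 1.
Proof.
move=> /cvgrPdist_lt /(_ 1 ltr01); apply: filterS => t /ltW fa.
by rewrite -[f t](subKr a) (le_trans (ler_normB _ _)) ?lerD2l.
Qed.

Lemma cvg_sum0 {T} {F : set_system T} {FF : ProperFilter F} (f g : T -> Cx R) :
  (fun t => f t + g t) @ F --> 0 ->
  (cvg (f @ F) <-> cvg (g @ F)) /\ (cvg (g @ F) -> lim (f @ F) = - lim (g @ F)).
Proof.
move=> fg0.
have f_eq : f = (fun t => (f t + g t) - g t) by apply/funext => t; rewrite addrK.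
have g_eq : g = (fun t => (f t + g t) - f t).
  by apply/funext => t; rewrite [f t + _]addrC addrK.
have f_lim : cvg (g @ F) -> f @ F --> 0 - lim (g @ F).
  by move=> cg; rewrite f_eq; exact: cvgB fg0 cg.
split; first split.
- by move=> cf; apply: (cvgP (0 - lim (f @ F))); rewrite g_eq; exact: cvgB fg0 cf.
- by move=> cg; apply: cvgP (f_lim cg).
- by move=> cg; rewrite (cvg_lim _ (f_lim cg)) // sub0r.
Qed.

End Convergence.

Lemma split_last2 (T : Type) (r : seq T) : (2 <= size r)%N ->
  exists m a b, r = m ++ [:: a; b].
Proof.
case/lastP: r => [|r' b] //; case/lastP: r' => [|m a] // _.
by exists m, a, b; rewrite -!cats1 -catA.
Qed.

Lemma le_of_sqr_le_mul (R : numDomainType) (n a : R) :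
  0 <= n -> 0 <= a -> n ^+ 2 <= n * a -> n <= a.
Proof.
move=> n0 a0; have [->//|n_neq0] := eqVneq n 0.
by rewrite expr2 ler_pM2l // lt_def n_neq0.
Qed.

(* A Riesz-type representation: if [x |-> <L x, z>] is represented in V for
   z in a dense set, it is for every z, by a limit of representing vectors.
   This is what makes the [xget] in [pmat], [Tsg] and [adjoint] meaningful. *)
Section DenseRepresentation.
Variables (R : realType) (V W : completeNormedModType (Cx R)).
Variables (ipV : V -> V -> Cx R) (ipW : W -> W -> Cx R).
Hypotheses (HV : is_hilbert ipV) (HW : is_hilbert ipW).
Variables (L : V -> W) (M : Cx R).
Hypotheses (M_ge0 : 0 <= M) (L_bounded : forall x, `|L x| <= M * `|x|).
Variable S : set W.
Hypothesis S_dense : closure S = setT.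
Hypothesis S_repr : forall z, S z -> exists y, forall x, ipV x y = ipW (L x) z.

Let rep z := xget 0 [set y | forall x, ipV x y = ipW (L x) z].

Let repP z : S z -> forall x, ipV x (rep z) = ipW (L x) z.
Proof. by move=> Sz; have := xgetPex 0 (S_repr Sz). Qed.

Let rep_lipschitz z1 z2 : S z1 -> S z2 -> `|rep z1 - rep z2| <= M * `|z1 - z2|.
Proof.
move=> S1 S2; set d := rep z1 - rep z2.
have d_repr x : ipV x d = ipW (L x) (z1 - z2) by rewrite !iprB // !repP.
apply: le_of_sqr_le_mul; rewrite ?mulr_ge0 //.
rewrite -(ger0_norm (exprn_ge0 2 (normr_ge0 d))) -(ip_norm HV) d_repr.
rewrite (le_trans (cauchy_schwarz HW _ _)) // mulrCA mulrA.
by rewrite ler_wpM2r // mulrC.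
Qed.

Let rep_cauchy (w : W) : cauchy (rep @ within S (nbhs w)).
Proof.
have M1_gt0 : 0 < M + 1 by rewrite ltr_wpDl.
apply/cauchy_ballP => e e0.
pose r := e / (M + 1) / 2.
have r_gt0 : 0 < r by rewrite !divr_gt0.
pose A := [set rep z | z in S `&` ball w r].
have GA : (rep @ within S (nbhs w)) A.
  by apply: filterS (nbhsx_ballx w r r_gt0) => z wz Sz; exists z.
exists (A, A) => //= -[_ _] /= [[z1 [S1 w1] <-] [z2 [S2 w2] <-]].
rewrite -ball_normE /= in w1 w2.
have z12 : `|z1 - z2| < r + r.
  by rewrite (le_lt_trans (ler_distD w _ _)) // distrC ltrD.
have e_eq : (M + 1) * (r + r) = e.
  by rewrite /r -mulr2n -mulr_natr; field; rewrite gt_eqF.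
rewrite -ball_normE /= (le_lt_trans (rep_lipschitz S1 S2)) // -e_eq.
by rewrite (le_lt_trans (y := (M + 1) * `|z1 - z2|)) ?ler_wpM2r ?lerDl ?ltr_pM2l.
Qed.

Lemma dense_representable w : exists y, forall x, ipV x y = ipW (L x) w.
Proof.
pose G := within S (nbhs w).
have GP : ProperFilter G by apply: within_nbhs_proper; rewrite S_dense.
have GS : G S by apply: nearW.
exists (lim (rep @ G)) => x.
have rep_cvg : (fun z => ipV x (rep z)) @ G --> ipV x (lim (rep @ G)).
  exact/(cvg_ipr HV)/cauchy_cvgP/rep_cauchy.
have w_cvg : (fun z => ipW (L x) z) @ G --> ipW (L x) w.
  exact/(cvg_ipr HW)/cvg_within.
have w_cvg' : (fun z => ipV x (rep z)) @ G --> ipW (L x) w.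
  by apply: cvg_trans w_cvg; apply: near_eq_cvg; apply: filterS GS => z /repP.
exact: cvg_unique _ rep_cvg w_cvg'.
Qed.

End DenseRepresentation.

Section Setting.
Variables (R : realType) (h H K : completeNormedModType (Cx R)).
Variables (iph : h -> h -> Cx R) (ipH : H -> H -> Cx R) (ipK : K -> K -> Cx R).
Variables (tens : h -> H -> K) (Omega : H) (U : R -> R -> K -> K).
Hypotheses (Hh : is_hilbert iph) (HH : is_hilbert ipH) (HK : is_hilbert ipK).
Hypothesis Ht : is_tensor iph ipH ipK tens.
Hypothesis U_unitary : forall s t, 0 <= s -> s <= t -> unitary ipK (U s t).

Lemma norm_tens u x : `|tens u x| = `|u| * `|x|.
Proof.
apply/eqP; rewrite -(@eqrXn2 _ 2) ?mulr_ge0 //.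
by rewrite -(ip_norm HK) (tens_ip Ht) !(ip_norm Hh, ip_norm HH) exprMn.
Qed.

Lemma tens_repr u w : exists y, forall x, ipH x y = ipK (tens u x) w.
Proof.
apply: (dense_representable HH HK (M := `|u|)) (tens_dense Ht) _ _ => //.
  by move=> x; rewrite norm_tens.
move=> _ [n [us [xs ->]]]; exists (\sum_(k < n) iph u (us k) *: xs k) => x.
rewrite (ipr_sum HH) (ipr_sum HK); apply: eq_bigr => k _.
by rewrite (iprZ HH) (tens_ip Ht).
Qed.

Lemma tens_Omega_repr w : exists y, forall u, iph u y = ipK (tens u Omega) w.
Proof.
apply: (dense_representable Hh HK (M := `|Omega|)) (tens_dense Ht) _ _ => //.
  by move=> u; rewrite norm_tens mulrC.
move=> _ [n [us [xs ->]]]; exists (\sum_(k < n) ipH Omega (xs k) *: us k) => u.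
rewrite (ipr_sum Hh) (ipr_sum HK); apply: eq_bigr => k _.
by rewrite (iprZ Hh) (tens_ip Ht) mulrC.
Qed.

Lemma pmatP A u v x2 x1 :
  ipH x1 (pmat ipH ipK tens A u v x2) = ipK (tens u x1) (A (tens v x2)).
Proof. by have /= := xgetPex 0 (tens_repr u (A (tens v x2))); apply. Qed.

Lemma TsgP t v u :
  iph u (Tsg iph ipH ipK tens Omega U t v) = ipK (tens u Omega) (U 0 t (tens v Omega)).
Proof.
have [y yP] := tens_Omega_repr (U 0 t (tens v Omega)).
have ex : exists y, forall u, iph u y = ipH Omega (pmat ipH ipK tens (U 0 t) u v Omega).
  by exists y => u'; rewrite pmatP yP.
by have /= -> := xgetPex 0 ex; rewrite pmatP.
Qed.

Notation Ue := (Ueps ipK U).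
Notation Dop := (Dop ipH ipK tens U).

Definition dU e t x := Ue e 0 t x - x.

Lemma pmat_Ueps e t p w y :
  pmat ipH ipK tens (Ue e 0 t) p w y = Dop e t p w y + iph p w *: y.
Proof.
apply: (ip_inj HH) => z.
by rewrite pmatP (iprD HH) pmatP (iprZ HH) (iprB HK) (tens_ip Ht) subrK.
Qed.

Definition Dword t (l : seq (bool * h * h)) : H -> H :=
  foldr (fun f acc => Dop f.1.1 t f.1.2 f.2 \o acc) id l.

Definition Dexpect t l := ipH Omega (Dword t l Omega).

Lemma dquotE l t : dquot ipH ipK tens Omega U l t = (t%:C)%C^-1 * Dexpect t l.
Proof. by []. Qed.

Lemma Dword_cat t l1 l2 x : Dword t (l1 ++ l2) x = Dword t l1 (Dword t l2 x).
Proof. by elim: l1 => //= f l1 ->. Qed.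

(* D_e(u,v)^* = D_{~~e}(v,u), see ip_Dopl *)
Definition adj_letter (f : bool * h * h) := (~~ f.1.1, f.2, f.1.2).
Definition adj_word l := rev (map adj_letter l).

Lemma size_adj_word l : size (adj_word l) = size l.
Proof. by rewrite size_rev size_map. Qed.

Definition conj_word e u v g w : seq (bool * h * h) :=
  [:: (e, u, v); (g, w, w); (~~ e, v, u)].

Definition word_bound (l : seq (bool * h * h)) : Cx R :=
  \prod_(f <- l) (`|f.1.2| * `|f.2| *+ 2).

Lemma word_bound_ge0 l : 0 <= word_bound l.
Proof. by apply: prodr_ge0 => f _; rewrite mulrn_wge0 ?mulr_ge0. Qed.

Section FixedTime.
Variable t : R.
Hypothesis t_ge0 : 0 <= t.

Let Ut_unitary := U_unitary (lexx 0) t_ge0.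

Lemma adjointP y x : ipK (adjoint ipK (U 0 t) y) x = ipK y (U 0 t x).
Proof.
case: Ut_unitary => _ Uiso Usurj; have [z <-] := Usurj y.
have ex : exists z', forall x, ipK z' x = ipK (U 0 t z) (U 0 t x).
  by exists z => x'; rewrite Uiso.
by have /= := xgetPex 0 ex; apply.
Qed.

Lemma adjointK y : U 0 t (adjoint ipK (U 0 t) y) = y.
Proof.
case: Ut_unitary => _ Uiso Usurj; apply: (ip_inj HK) => z.
have [w <-] := Usurj z.
by rewrite Uiso (ip_conj HK) adjointP -(ip_conj HK).
Qed.

Lemma Ueps_adj e x y : ipK (Ue e 0 t x) y = ipK x (Ue (~~ e) 0 t y).
Proof.
case: e; rewrite /Ueps /=; first exact: adjointP.
by rewrite [RHS](ip_conj HK) adjointP -(ip_conj HK).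
Qed.

Lemma Ueps_isometry e x y : ipK (Ue e 0 t x) (Ue e 0 t y) = ipK x y.
Proof.
by case: e; rewrite /Ueps /=; [rewrite adjointP adjointK | case: Ut_unitary].
Qed.

Lemma norm_Ueps e x : `|Ue e 0 t x| = `|x|.
Proof. by apply/eqP; rewrite -(@eqrXn2 _ 2) // -!(ip_norm HK) Ueps_isometry. Qed.

Lemma dU_adj e x y : ipK (dU e t x) y = ipK x (dU (~~ e) t y).
Proof. by rewrite (iplB HK) (iprB HK) Ueps_adj. Qed.

Lemma ip_dU e x y :
  ipK (dU e t x) (dU e t y) = - ipK x (dU (~~ e) t y) - ipK x (dU e t y).
Proof. by rewrite !(iplB HK) !(iprB HK) Ueps_isometry Ueps_adj; ring. Qed.

Lemma ip_dU_tens e w x : ipK (dU e t (tens w x)) (dU e t (tens w x))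
  = - (ipH x (Dop (~~ e) t w w x) + ipH x (Dop e t w w x)).
Proof. by rewrite ip_dU !pmatP opprD. Qed.

Lemma ip_Dopl e u v x y : ipH (Dop e t u v x) y = ipH x (Dop (~~ e) t v u y).
Proof. by rewrite (ip_conj HH) pmatP -(ip_conj HK) dU_adj -pmatP. Qed.

Lemma ip_Dopr e u v x y : ipH x (Dop e t u v y) = ipH (Dop (~~ e) t v u x) y.
Proof. by rewrite ip_Dopl negbK. Qed.

Lemma DopD e u v x y : Dop e t u v (x + y) = Dop e t u v x + Dop e t u v y.
Proof. by apply: (ip_inj HH) => z; rewrite (iprD HH) !ip_Dopr (iprD HH). Qed.

Lemma DopZ e u v a x : Dop e t u v (a *: x) = a *: Dop e t u v x.
Proof. by apply: (ip_inj HH) => z; rewrite (iprZ HH) !ip_Dopr (iprZ HH). Qed.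

Lemma DopB e u v x y : Dop e t u v (x - y) = Dop e t u v x - Dop e t u v y.
Proof. by apply: (ip_inj HH) => z; rewrite (iprB HH) !ip_Dopr (iprB HH). Qed.

Lemma Dop_norm_le e u v x : `|Dop e t u v x| <= (`|u| * `|v| *+ 2) * `|x|.
Proof.
set d := Dop e t u v x.
have dU_le : `|dU e t (tens v x)| <= `|v| *+ 2 * `|x|.
  by rewrite (le_trans (ler_normB _ _)) // norm_Ueps norm_tens -mulr2n mulrnAl.
apply: (@le_trans _ _ (`|u| * `|dU e t (tens v x)|)).
  apply: le_of_sqr_le_mul; rewrite ?mulr_ge0 //.
  rewrite -(ger0_norm (exprn_ge0 2 (normr_ge0 d))) -(ip_norm HH) pmatP.
  by rewrite (le_trans (cauchy_schwarz HK _ _)) // norm_tens mulrCA mulrA.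
by rewrite -mulrnAr -mulrA ler_wpM2l.
Qed.

(* ||D x||^2 = <u (x) D x, dU (v (x) x)> is controlled by ||dU (v (x) x)||^2,
   which ip_dU expresses through D(v,v) and its adjoint *)
Lemma Dop_norm_sqr_le e u v x : `|Dop e t u v x| ^+ 2 <=
  `|u| ^+ 2 * `|ipH x (Dop (~~ e) t v v x) + ipH x (Dop e t v v x)|.
Proof.
set d := Dop e t u v x; set z := dU e t (tens v x).
have d_sqr : `|d| ^+ 2 = ipK (tens u d) z by rewrite -(ip_norm HH) pmatP.
have z_sqr : `|ipH x (Dop (~~ e) t v v x) + ipH x (Dop e t v v x)| = `|ipK z z|.
  by rewrite ip_dU_tens normrN.
rewrite z_sqr; apply: le_of_sqr_le_mul; rewrite ?mulr_ge0 //.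
rewrite -[X in X ^+ 2 <= _](ger0_norm (exprn_ge0 2 (normr_ge0 d))) d_sqr.
rewrite (le_trans (cauchy_schwarz_sqr HK _ _)) //.
rewrite (tens_ip Ht) (ip_norm Hh) (ip_norm HH) -d_sqr.
by rewrite (ger0_norm (ip_ge0 HK z)) -mulrA mulrCA.
Qed.

(* Cauchy-Schwarz for the positive form <dU (u (x) x), dU (v (x) y)>. *)
Lemma Dop_sum_cauchy_schwarz u v x y :
  `|ipH (Dop true t u v y) x + ipH (Dop false t u v y) x| ^+ 2
  <= `|ipH x (Dop true t u u x) + ipH x (Dop false t u u x)|
     * `|ipH y (Dop true t v v y) + ipH y (Dop false t v v y)|.
Proof.
set a := dU false t (tens u x); set b := dU false t (tens v y).
have -> : ipH (Dop true t u v y) x + ipH (Dop false t u v y) x = - (ipK a b)^*.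
  by rewrite ip_dU !(ip_conj HH x) !pmatP -rmorphN -rmorphD; congr (_^*); ring.
rewrite normrN norm_conjC (le_trans (cauchy_schwarz_sqr HK _ _)) //.
have ab_ge0 : 0 <= ipK a a * ipK b b by rewrite mulr_ge0 ?ip_ge0.
by rewrite !ip_dU_tens mulrNN in ab_ge0 *; rewrite -normrM ger0_norm.
Qed.

Lemma ip_Dwordl l x y : ipH (Dword t l x) y = ipH x (Dword t (adj_word l) y).
Proof.
elim: l x y => [|[[e u] v] l IH] x y //=.
by rewrite ip_Dopl IH /adj_word rev_cons -cats1 Dword_cat.
Qed.

Lemma Dword_norm_le l x : `|Dword t l x| <= word_bound l * `|x|.
Proof.
elim: l x => [|f l IH] x /=; first by rewrite /word_bound big_nil mul1r.
rewrite /word_bound big_cons -mulrA (le_trans (Dop_norm_le _ _ _ _)) //.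
by rewrite ler_wpM2l ?mulrn_wge0 ?mulr_ge0.
Qed.

(* Move the two outer letters on each side across the inner product, then
   bound each side by Dop_norm_sqr_le: a word of length n >= 4 is controlled
   by words of length 3. *)
Lemma Dexpect_sqr_le e1 u1 v1 e2 u2 v2 m e3 u3 v3 e4 u4 v4 :
  `|Dexpect t ((e1, u1, v1) :: (e2, u2, v2) :: m ++ [:: (e3, u3, v3); (e4, u4, v4)])| ^+ 2
  <= word_bound m ^+ 2
     * (`|v2| ^+ 2 * `|Dexpect t (conj_word e1 u1 v1 e2 u2)
                       + Dexpect t (conj_word e1 u1 v1 (~~ e2) u2)|)
     * (`|u3| ^+ 2 * `|Dexpect t (conj_word (~~ e4) v4 u4 (~~ e3) v3)
                       + Dexpect t (conj_word (~~ e4) v4 u4 e3 v3)|).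
Proof.
set al := Dop (~~ e2) t v2 u2 (Dop (~~ e1) t v1 u1 Omega).
set be := Dop e3 t u3 v3 (Dop e4 t u4 v4 Omega).
have -> : Dexpect t ((e1, u1, v1) :: (e2, u2, v2) :: m ++ [:: (e3, u3, v3); (e4, u4, v4)])
    = ipH al (Dword t m be) by rewrite /Dexpect /= Dword_cat /= !ip_Dopr.
have al_le : `|al| ^+ 2 <= `|v2| ^+ 2 * `|Dexpect t (conj_word e1 u1 v1 e2 u2)
                                           + Dexpect t (conj_word e1 u1 v1 (~~ e2) u2)|.
  rewrite (le_trans (Dop_norm_sqr_le _ _ _ _)) // negbK.
  by rewrite /Dexpect /= !(ip_Dopl (~~ e1)) !negbK.
have be_le : `|be| ^+ 2 <= `|u3| ^+ 2 * `|Dexpect t (conj_word (~~ e4) v4 u4 (~~ e3) v3)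
                                           + Dexpect t (conj_word (~~ e4) v4 u4 e3 v3)|.
  by rewrite (le_trans (Dop_norm_sqr_le _ _ _ _)) // /Dexpect /= !(ip_Dopl e4) negbK.
apply: (@le_trans _ _ ((word_bound m * (`|al| * `|be|)) ^+ 2)).
  rewrite ler_pXn2r ?nnegrE ?mulr_ge0 ?word_bound_ge0 //.
  by rewrite (le_trans (cauchy_schwarz HH _ _)) // mulrCA ler_wpM2l // Dword_norm_le.
by rewrite !exprMn -mulrA ler_wpM2l ?exprn_ge0 ?word_bound_ge0 // ler_pM ?exprn_ge0.
Qed.

End FixedTime.

Section Limits.
Hypothesis cond : Cond ipH ipK tens Omega U.

Notation dquot := (dquot ipH ipK tens Omega U).

Lemma dquot_cvg0 l : (3 <= size l)%N -> dquot l @ 0^'+ --> 0.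
Proof.
move=> l_ge3; have [/cond//|l_neq3] := eqVneq (size l) 3.
case: l l_ge3 l_neq3 => [|[[e1 u1] v1] [|[[e2 u2] v2] r]] //= r_ge1 r_neq1.
have [m [[[e3 u3] v3] [[[e4 u4] v4] ->]]] : exists m a b, r = m ++ [:: a; b].
  by apply: split_last2; lia.
pose A t := dquot (conj_word e1 u1 v1 e2 u2) t + dquot (conj_word e1 u1 v1 (~~ e2) u2) t.
pose B t := dquot (conj_word (~~ e4) v4 u4 (~~ e3) v3) t
            + dquot (conj_word (~~ e4) v4 u4 e3 v3) t.
apply: (@cvg0_sqr_le _ _ _ _ _
  (fun t => word_bound m ^+ 2 * (`|v2| ^+ 2 * A t) * (`|u3| ^+ 2 * B t))); last first.
  by apply: cvg0M; [apply: cvg0Ml; apply: cvg0Ml|apply: cvg0Ml];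
     apply: cvg0D; apply: cond.
near=> t.
have t_gt0 : 0 < t by near: t; exact: nbhs_right_gt.
rewrite /A /B !dquotE -!mulrDr normrM exprMn.
rewrite (le_trans (ler_wpM2l _ (Dexpect_sqr_le (ltW t_gt0) _ _ _ _ _ _ _ _ _ _ _ _ _))) //.
rewrite !normrM !normr_id (ger0_norm (word_bound_ge0 m)).
by rewrite le_eqVlt; apply/orP; left; apply/eqP; ring.
Unshelve. all: by end_near.
Qed.

Inductive Dcomb : (R -> H) -> Prop :=
| Dcomb_word w : w != [::] -> Dcomb (fun t => Dword t w Omega)
| Dcomb_add f g : Dcomb f -> Dcomb g -> Dcomb (fun t => f t + g t)
| Dcomb_scale c f : Dcomb f -> Dcomb (fun t => c *: f t)
| Dcomb_eq f g : Dcomb f -> (forall t, 0 < t -> f t = g t) -> Dcomb g.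

Lemma Dcomb_cvg0 (phi : R -> H -> Cx R) (s : Cx R -> Cx R) :
  (forall t x y, 0 < t -> phi t (x + y) = phi t x + phi t y) ->
  (forall t c x, 0 < t -> phi t (c *: x) = s c * phi t x) ->
  (forall w, w != [::] -> (fun t => phi t (Dword t w Omega)) @ 0^'+ --> 0) ->
  forall f, Dcomb f -> (fun t => phi t (f t)) @ 0^'+ --> 0.
Proof.
move=> phiD phiZ phiW f; elim=> [w /phiW //|f1 f2 _ f1_0 _ f2_0|c f1 _ f1_0|f1 f2 _ f1_0 f12].
- by apply: cvg_at_right_eq (cvg0D f1_0 f2_0) => t /phiD.
- by apply: cvg_at_right_eq (cvg0Ml (s c) f1_0) => t /phiZ.
- by apply: cvg_at_right_eq f1_0 => t /f12 ->.
Qed.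

(* By sesquilinearity it suffices to take f, g single words W, W', and then
   <W Omega, D W' Omega> = <Omega, W^* D W' Omega> is the expectation of a word
   of length >= 3. *)
Lemma Dcomb_Dop_cvg0 e u v f g : Dcomb f -> Dcomb g ->
  (fun t : R => (t%:C)%C^-1 * ipH (f t) (Dop e t u v (g t))) @ 0^'+ --> (0 : Cx R).
Proof.
move=> Df Dg.
apply: (@Dcomb_cvg0 (fun t y => (t%:C)%C^-1 * ipH (f t) (Dop e t u v y)) id _ _ _ _ Dg).
- by move=> t x y t_gt0; rewrite (DopD (ltW t_gt0)) (iprD HH) mulrDr.
- by move=> t c x t_gt0; rewrite (DopZ (ltW t_gt0)) (iprZ HH) mulrCA.
move=> w w_neq0.
apply: (@Dcomb_cvg0 (fun t x => (t%:C)%C^-1 * ipH x (Dop e t u v (Dword t w Omega))) Num.conj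
  _ _ _ _ Df) => [t x y _|t c x _|w' w'_neq0].
- by rewrite (iplD HH) mulrDr.
- by rewrite (iplZ HH) mulrCA.
apply: (cvg_at_right_eq (g := dquot (adj_word w' ++ (e, u, v) :: w))).
  by move=> t t_gt0; rewrite dquotE /Dexpect (ip_Dwordl (ltW t_gt0)) Dword_cat.
apply: dquot_cvg0; rewrite size_cat size_adj_word /= addnS.
case: w w_neq0 => // ? w _; case: w' w'_neq0 => // ? w' _.
by rewrite /= addSn addnS.
Qed.

Lemma Dcomb_Dop e u v f : Dcomb f -> Dcomb (fun t => Dop e t u v (f t)).
Proof.
elim=> [w w_neq0|f1 f2 _ Df1 _ Df2|c f1 _ Df1|f1 f2 _ Df1 f12].
- exact: (Dcomb_word (w := (e, u, v) :: w)).
- by apply: Dcomb_eq (Dcomb_add Df1 Df2) _ => t /ltW t_ge0; rewrite DopD.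
- by apply: Dcomb_eq (Dcomb_scale c Df1) _ => t /ltW t_ge0; rewrite DopZ.
- by apply: Dcomb_eq Df1 _ => t /f12 ->.
Qed.

Definition centered_prodop l t :=
  prodop ipH ipK tens U (unif 0 t l) Omega - (\prod_(f <- l) iph f.1.2 f.2) *: Omega.

(* Expand each factor U^{(e)}_t(p_k, w_k) = D_e(p_k, w_k) + <p_k, w_k>. *)
Lemma Dcomb_prodop l : Dcomb (centered_prodop l).
Proof.
rewrite /centered_prodop; elim: l => [|[[e p] w] l IH].
  apply: Dcomb_eq (Dcomb_scale 0 (Dcomb_word (w := [:: (false, 0, 0)]) _)) _ => // t _.
  by rewrite big_nil scale1r subrr scale0r.
set c := \prod_(f <- l) iph f.1.2 f.2 in IH *.
apply: Dcomb_eq (Dcomb_add (Dcomb_add (Dcomb_Dop e p w IH)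
  (Dcomb_scale c (Dcomb_word (w := [:: (e, p, w)]) _))) (Dcomb_scale (iph p w) IH)) _ => //.
move=> t /ltW t_ge0; rewrite big_cons -/c /= pmat_Ueps.
by rewrite DopB // DopZ // subrK scalerBr scalerA addrA.
Qed.

Notation mixq := (mixq iph ipH ipK tens Omega U).

Lemma mixq_sum_sqr_le u v l t : 0 < t ->
  `|mixq true u v l t + mixq false u v l t| ^+ 2
  <= `|(t%:C)%C^-1 * (ipH (centered_prodop l t) (Dop true t u u (centered_prodop l t))
                     + ipH (centered_prodop l t) (Dop false t u u (centered_prodop l t)))|
     * `|(t%:C)%C^-1 * (ipH Omega (Dop true t v v Omega) + ipH Omega (Dop false t v v Omega))|.
Proof.
move=> t_gt0; rewrite /mixq -mulrDr normrM exprMn.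
rewrite (le_trans (ler_wpM2l _ (Dop_sum_cauchy_schwarz (ltW t_gt0) _ _ _ _))) //.
by rewrite !normrM le_eqVlt; apply/orP; left; apply/eqP; ring.
Qed.

Hypothesis Omega_norm : `|Omega| = 1.

Notation Tsg := (Tsg iph ipH ipK tens Omega U).

Lemma ip_Dop_Tsg t v : ipH Omega (Dop false t v v Omega) = iph v (Tsg t v - v).
Proof.
rewrite pmatP /Ueps /= (iprB HK) (iprB Hh) TsgP (tens_ip Ht) (ip_norm HH).
by rewrite Omega_norm expr1n mulr1.
Qed.

Lemma Dexpect_Tsg_le t v : 0 < t ->
  `|(t%:C)%C^-1 * (ipH Omega (Dop true t v v Omega) + ipH Omega (Dop false t v v Omega))|
  <= `|v| *+ 2 * `|(t%:C)%C^-1 *: (Tsg t v - v)|.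
Proof.
move=> /ltW t_ge0.
rewrite (ip_Dopr t_ge0) (ip_conj HH) ip_Dop_Tsg normrM normrZ mulrCA ler_wpM2l //.
by rewrite (le_trans (ler_normD _ _)) // norm_conjC mulr2n mulrDl lerD ?cauchy_schwarz.
Qed.

Lemma mixq_sum_cvg0 u v l : domG iph ipH ipK tens Omega U v ->
  (fun t => mixq true u v l t + mixq false u v l t) @ 0^'+ --> 0.
Proof.
move=> /cvg_norm_le_near; set M := _ + 1 => Tsg_le.
pose X t := (t%:C)%C^-1 * (ipH (centered_prodop l t) (Dop true t u u (centered_prodop l t))
                         + ipH (centered_prodop l t) (Dop false t u u (centered_prodop l t))).
apply: (@cvg0_sqr_le _ _ _ _ _ (fun t => `|v| *+ 2 * M * X t)); last first.
  apply: cvg0Ml; have D := Dcomb_prodop l.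
  apply: cvg_at_right_eq (cvg0D (Dcomb_Dop_cvg0 true u u D D) (Dcomb_Dop_cvg0 false u u D D)).
  by move=> t _; rewrite /X mulrDr.
near=> t.
have t_gt0 : 0 < t by near: t; exact: nbhs_right_gt.
have M_ge0 : 0 <= M by rewrite addr_ge0.
rewrite (le_trans (mixq_sum_sqr_le _ _ _ t_gt0)) // -/(X t) [X in _ <= X]normrM.
rewrite ger0_norm ?mulr_ge0 // mulrC ler_wpM2r // (le_trans (Dexpect_Tsg_le _ t_gt0)) //.
by rewrite ler_wpM2l //; near: t; exact: Tsg_le.
Unshelve. all: by end_near.
Qed.

End Limits.

End Setting.

Unset Implicit Arguments.

Theorem lemma3p4 (R : realType) (h H K : completeNormedModType (Cx R))
  (iph : h -> h -> Cx R) (ipH : H -> H -> Cx R) (ipK : K -> K -> Cx R)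
  (tens : h -> H -> K) (Omega : H) (U : R -> R -> K -> K) :
  is_hilbert iph -> is_hilbert ipH -> is_hilbert ipK ->
  is_tensor iph ipH ipK tens ->
  `|Omega| = 1 ->
  (forall s t, 0 <= s -> s <= t -> unitary ipK (U s t)) ->
  A1 U ->
  A2i ipH ipK tens U ->
  A2ii ipH ipK tens Omega U ->
  A3 ipH ipK tens Omega U ->
  Bp ipH ipK tens Omega U ->
  Cond ipH ipK tens Omega U ->
  (* (i) *)
  (forall l : seq (bool * h * h), (3 <= size l)%N ->
     dquot ipH ipK tens Omega U l @ 0^'+ --> (0 : Cx R)) /\
  (* (ii) *)
  (forall (u v : h), domG iph ipH ipK tens Omega U v ->
   forall (e : bool) (l : seq (bool * h * h)), (0 < size l)%N ->
     (cvg (mixq iph ipH ipK tens Omega U e u v l @ 0^'+) <->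
      cvg (mixq iph ipH ipK tens Omega U false u v l @ 0^'+)) /\
     (cvg (mixq iph ipH ipK tens Omega U false u v l @ 0^'+) ->
      lim (mixq iph ipH ipK tens Omega U e u v l @ 0^'+) =
      (-1) ^+ e * lim (mixq iph ipH ipK tens Omega U false u v l @ 0^'+))).
Proof.
move=> Hh HH HK Ht Omega_norm U_unitary _ _ _ _ _ cond.
split=> [l l_ge3|u v v_dom e l _]; first exact: (dquot_cvg0 Hh HH HK Ht U_unitary cond).
case: e; last by split=> // _; rewrite expr0 mul1r.
have [cvg_iff lim_eq] := cvg_sum0 (mixq_sum_cvg0 Hh HH HK Ht U_unitary cond Omega_norm u l v_dom).
by split=> // /lim_eq ->; rewrite expr1 mulN1r.
Qed.
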